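(* For $i\in\{1,2\}$ let $(\mathcal B_{i,\mathbb R},\mathcal S_i,e_i,m_i)$ be as in the context, with the same constant $\kappa$. Let $\mathcal L\in L(\mathcal B_{1,\mathbb R},\mathcal B_{2,\mathbb R})$ and $\mathcal L_{\mathbb C}\in L(\mathcal B_{1,\mathbb C},\mathcal B_{2,\mathbb C})$. Assume $\mathcal L(\mathcal C_{1,\mathbb R})\subset\mathcal C_{2,\mathbb R}$ and $\Delta_{\mathbb R}:=\operatorname{diam}_{d_H}(\mathcal L(\mathcal C_{1,\mathbb R}))<\infty$. If there exists $\varepsilon\in\big(0,\frac{\kappa^2}{12\sqrt2}e^{-2\Delta_{\mathbb R}}\big)$ such that for all $\ell\in\mathcal S_2$ and all $h\in\mathcal C_{1,\mathbb R}$, \[|\ell(\mathcal L_{\mathbb C}h)-\ell(\mathcal Lh)|\le\varepsilon\,\ell(\mathcal Lh),\] then $\mathcal L_{\mathbb C}(\mathcal C_{1,\mathbb C})\subset\mathcal C_{2,\mathbb C}$ and \[\operatorname{diam}_{\delta_{\mathcal C_{2,\mathbb C}}}(\mathcal L_{\mathbb C}(\mathcal C_{1,\mathbb C}))\le8\Delta_{\mathbb R}+2\ln[3\sqrt2\kappa^{-2}]+\tfrac{\sqrt2}{3}\kappa^2e^{-2\Delta_{\mathbb R}}.\]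
   Context: Cone setting. $V$ is a real topological vector space, $\mathcal S\subset V'$ a set of linear functionals such that $\ell(x)=0$ for all $\ell\in\mathcal S$ implies $x=0$, and $C_{\mathbb R}=\{h\in V\setminus\{0\}:\ell(h)\ge0\ \forall\ell\in\mathcal S\}$. There is $e\in C_{\mathbb R}$ such that for every $h\in V$ some $\lambda\ge0$ has $\lambda e-h\in C_{\mathbb R}$. The norm is $\|h\|=\inf\{\lambda\ge0:\ell(\lambda e\pm h)\ge0\ \forall\ell\in\mathcal S\}$ and $\mathcal B_{\mathbb R}$ is the completion of $V$; $\mathcal C_{\mathbb R}=\{h\in\mathcal B_{\mathbb R}\setminus\{0\}:\ell(h)\ge0\ \forall\ell\in\mathcal S\}$. $\mathcal S_*$ is the weak-$*$ closure of the convex hull of $\{\lambda\ell:\lambda>0,\ell\in\mathcal S\}$, and there exist $m\in\mathcal S_*$ and $\kappa\in(0,1)$ with $m(e)=1$ and $m(h)\ge\kappa\|h\|$ for all $h\in\mathcal C_{\mathbb R}$. $\mathcal C'_{\mathbb R}=\{\ell\in\mathcal B'_{\mathbb R}:\ell(h)\ge0\ \forall h\in\mathcal C_{\mathbb R}\}$. The Hilbert metric on $\mathcal C_{\mathbb R}$ is $d_H(h,g)=\ln(\beta/\alpha)$, $\alpha=\sup\{\lambda>0:g-\lambda h\in\mathcal C_{\mathbb R}\}$, $\beta=\inf\{\mu>0:\mu h-g\in\mathcal C_{\mathbb R}\}$. $\mathcal B_{\mathbb C}$ is the complexification (elements $x+iy$, $x,y\in\mathcal B_{\mathbb R}$, norm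 $\|x+iy\|=\sup_\theta(\|\Re(e^{i\theta}(x+iy))\|^2+\|\Im(e^{i\theta}(x+iy))\|^2)^{1/2}$), real functionals extended complex-linearly. Complex cone $\mathcal C_{\mathbb C}=\{z(x+iy):z\in\mathbb C\setminus\{0\},x,y\in\mathcal C_{\mathbb R}\}$; dual cone $\mathcal C'_{\mathbb C}=\{\ell\in\mathcal B'_{\mathbb C}:\ell(h)\ne0\ \forall h\in\mathcal C_{\mathbb C}\}$. For $h,g\in\mathcal C_{\mathbb C}$, $E(h,g)=\{\ell(h)/\ell(g):\ell\in\mathcal C'_{\mathbb C}\}$ and $\delta_{\mathcal C}(h,g)=\ln\frac{\sup_{z\in E(h,g)}|z|}{\inf_{z\in E(h,g)}|z|}$; diameters are taken with respect to $\delta_{\mathcal C}$. Objects of the $i$-th space carry index $i$. *)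

From HB Require Import structures.
From mathcomp Require Import all_boot all_order all_algebra.
From mathcomp Require Import all_classical all_reals all_analysis.
From mathcomp Require Import complex.
Import Order.TTheory GRing.Theory Num.Theory.

Set Implicit Arguments.
Unset Strict Implicit.
Unset Printing Implicit Defensive.

Local Open Scope ring_scope.
Local Open Scope classical_set_scope.

Section ConeDefs.
Variable R : realType.

Section Real.
Variable B : completeNormedModType R.

Definition is_rfunctional (l : B -> R) : Prop :=
  (forall (a : R) (x y : B), l (a *: x + y) = a * l x + l y) /\
  continuous (l : B -> R^o).

Definition rcone (S : set (B -> R)) : set B :=
  [set h | h != 0 /\ forall l, S l -> 0 <= l h].

Definition pos_hull (S : set (B -> R)) : set (B -> R) :=
  [set f | exists (n : nat) (t lam : 'I_n -> R) (ls : 'I_n -> (B -> R)),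
      (forall j, 0 <= t j) /\ \sum_(j < n) t j = 1 /\
      (forall j, 0 < lam j) /\ (forall j, S (ls j)) /\
      f = (fun x => \sum_(j < n) t j * (lam j * ls j x))].

(* S_* : weak-* closure (in B') of pos_hull S; basic weak-* neighbourhoods
   are given by a finite list of points and a radius *)
Definition Sstar (S : set (B -> R)) : set (B -> R) :=
  [set m | is_rfunctional m /\
     forall (xs : seq B) (eps : R), 0 < eps ->
       exists f, pos_hull S f /\ forall x, x \in xs -> `|f x - m x| < eps].

Definition cone_setting (S : set (B -> R)) (e : B) (m : B -> R) (kappa : R)
  : Prop :=
  (forall l, S l -> is_rfunctional l) /\
  (forall x, (forall l, S l -> l x = 0) -> x = 0) /\
  rcone S e /\
  (forall h, exists lam : R, 0 <= lam /\ rcone S (lam *: e - h)) /\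
  (forall h : B, `|h| = inf [set lam : R | 0 <= lam /\
        forall l, S l -> 0 <= l (lam *: e + h) /\ 0 <= l (lam *: e - h)]) /\
  Sstar S m /\ m e = 1 /\
  (forall h, rcone S h -> kappa * `|h| <= m h).

(* Hilbert metric on C_R (value +oo when alpha or beta degenerates) *)
Definition hilbert_alpha (S : set (B -> R)) (h g : B) : \bar R :=
  ereal_sup [set lam%:E | lam in [set lam : R | 0 < lam /\ rcone S (g - lam *: h)]].
Definition hilbert_beta (S : set (B -> R)) (h g : B) : \bar R :=
  ereal_inf [set mu%:E | mu in [set mu : R | 0 < mu /\ rcone S (mu *: h - g)]].
Definition dH (S : set (B -> R)) (h g : B) : \bar R :=
  let a := hilbert_alpha S h g in let b := hilbert_beta S h g in
  if ((0 < a)%E && (a < +oo)%E && (0 < b)%E && (b < +oo)%E)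
  then (ln (fine b / fine a))%:E else +oo%E.

(* ---------- complexification B_C = B x B, (x,y) standing for x + iy ---- *)
Definition cscale (z : R[i]) (p : B * B) : B * B :=
  (complex.Re z *: p.1 - complex.Im z *: p.2, complex.Im z *: p.1 + complex.Re z *: p.2).

(* continuous complex-linear functional on B_C, i.e. an element of B'_C
   (the norm of B_C is equivalent to the product norm, so continuity is
   continuity for the product topology) *)
Definition is_cfunctional (l : B * B -> R[i]) : Prop :=
  (forall (z : R[i]) (p q : B * B), l (cscale z p + q) = z * l p + l q) /\
  continuous ((fun p => complex.Re (l p)) : (B * B)%type -> R^o) /\
  continuous ((fun p => complex.Im (l p)) : (B * B)%type -> R^o).

Definition cext (l : B -> R) (p : B * B) : R[i] := (l p.1 +i* l p.2)%C.

Definition ccone (S : set (B -> R)) : set (B * B) :=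
  [set p | exists (z : R[i]) (x y : B),
     z != 0 /\ rcone S x /\ rcone S y /\ p = cscale z (x, y)].

Definition ccone_dual (S : set (B -> R)) : set (B * B -> R[i]) :=
  [set l | is_cfunctional l /\ forall h, ccone S h -> l h != 0].

Definition cmod (z : R[i]) : R := Num.sqrt (complex.Re z ^+ 2 + complex.Im z ^+ 2).

Definition Eset (S : set (B -> R)) (h g : B * B) : set R[i] :=
  [set l h / l g | l in ccone_dual S].

Definition deltaC (S : set (B -> R)) (h g : B * B) : \bar R :=
  let s := ereal_sup [set (cmod z)%:E | z in Eset S h g] in
  let i := ereal_inf [set (cmod z)%:E | z in Eset S h g] in
  if ((0 < i)%E && (i < +oo)%E && (s < +oo)%E) then (ln (fine s / fine i))%:E else +oo%E.

End Real.

Section Maps.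
Variables B1 B2 : completeNormedModType R.

Definition is_rop (L : B1 -> B2) : Prop :=
  (forall (a : R) (x y : B1), L (a *: x + y) = a *: L x + L y) /\
  continuous L.

Definition is_cop (L : B1 * B1 -> B2 * B2) : Prop :=
  (forall (z : R[i]) (p q : B1 * B1),
      L (cscale z p + q) = cscale z (L p) + L q) /\
  continuous (L : (B1 * B1)%type -> (B2 * B2)%type).

End Maps.

Definition diam (T : Type) (d : T -> T -> \bar R) (A : set T) : \bar R :=
  ereal_sup [set r | exists x y, A x /\ A y /\ r = d x y].
End ConeDefs.

(* Put h0 := L e1 and K := exp Delta.  For x, y in C1, the bound on the Hilbert
   diameter gives alpha, sigma > 0 with alpha l(h0) <= l(L x) <= K alpha l(h0) and
   sigma l(L x) <= l(L y) <= K sigma l(L x) for every l in S2: the points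
   l(L x) + i l(L y) lie in a fixed sector of the plane.  As LC is eps-close to L,
   the values l(LC (x + i y)) lie within eps (l(L x) + l(L y)) of that sector, and a
   single rotation zeta(sigma, K) puts all of them in the first quadrant at depth
   mu l(h0), while their moduli stay below M l(h0), with mu >= rho |zeta| M for a
   rho depending only on K and eps.  Such depth survives subtracting w q for any q
   of the image and |w| < rho, so no functional of the dual cone can map p - w q to
   0; hence |l(p) / l(q)| lies in [rho, 1/rho] and delta(p, q) <= 2 ln (1/rho)
   <= 4 Delta + 2 ln (3 sqrt 2), sharper than the bound claimed.  The dual cone is
   nonempty because it contains the extension of m2. *)

From Pilot Require Import Defs.
From HB Require Import structures.
From mathcomp Require Import all_boot all_order all_algebra.
From mathcomp Require Import all_classical all_reals all_analysis.
From mathcomp Require Import complex.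
From mathcomp Require Import ring lra.
Import Order.TTheory GRing.Theory Num.Theory.
Set Implicit Arguments.
Unset Strict Implicit.
Unset Printing Implicit Defensive.
Local Open Scope ring_scope.
Local Open Scope classical_set_scope.

(* [cscale] is also a name of MathComp-Analysis' theory of charges. *)
Notation cscale := Defs.cscale.

Section Complexification.
Variables (R : realType) (B : completeNormedModType R).
Implicit Types (x y : B) (p q : B * B) (z : R[i]).

Lemma cscale1 p : cscale 1 p = p.
Proof. by case: p => x y; rewrite /cscale /= !scale0r subr0 add0r !scale1r. Qed.

Lemma cscaleM z1 z2 p : cscale z1 (cscale z2 p) = cscale (z1 * z2) p.
Proof.
case: p => x y; case: z1 => a1 a2; case: z2 => b1 b2.
have lin (u v u' v' c c' : R) : c *: (u *: x + v *: y) + c' *: (u' *: x + v' *: y)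
    = (c * u + c' * u') *: x + (c * v + c' * v') *: y.
  by rewrite !scalerDr !scalerA addrACA -!scalerDl.
rewrite /cscale /= -![in LHS]scaleNr !lin.
by rewrite -[- (_ *: y)]scaleNr; congr pair; congr (_ *: _ + _ *: _); ring.
Qed.

Lemma cscale_diag z y :
  cscale z (y, y) = ((complex.Re z - complex.Im z) *: y, (complex.Im z + complex.Re z) *: y).
Proof. by rewrite /cscale /= scalerBl scalerDl. Qed.

Section RealFunctional.
Variable l : B -> R.
Hypothesis hl : is_rfunctional l.

Lemma rfunctional0 : l 0 = 0.
Proof.
have := hl.1 1 0 0; rewrite scale1r addr0 mul1r => h.
by have := congr1 (fun t => t - l 0) h; rewrite addrK subrr.
Qed.

Lemma rfunctionalD x y : l (x + y) = l x + l y.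
Proof. by have := hl.1 1 x y; rewrite scale1r mul1r. Qed.

Lemma rfunctionalZ a x : l (a *: x) = a * l x.
Proof. by have := hl.1 a x 0; rewrite !addr0 rfunctional0 addr0. Qed.

Lemma rfunctionalN x : l (- x) = - l x.
Proof. by rewrite -scaleN1r rfunctionalZ mulN1r. Qed.

Lemma rfunctionalB x y : l (x - y) = l x - l y.
Proof. by rewrite rfunctionalD rfunctionalN. Qed.

Lemma cext_linear z p q : cext l (cscale z p + q) = z * cext l p + cext l q.
Proof.
case: p => x y; case: q => u v; case: z => a b; rewrite /cext /cscale /=.
rewrite !rfunctionalD !rfunctionalN !rfunctionalZ.
by apply/eqP; rewrite eq_complex /=; apply/andP; split; apply/eqP; ring.
Qed.

Lemma cext0 : cext l 0 = 0.
Proof. by rewrite /cext /= rfunctional0. Qed.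

Lemma cextZ z p : cext l (cscale z p) = z * cext l p.
Proof. by rewrite -[cscale z p]addr0 cext_linear cext0 addr0. Qed.

Lemma cextD p q : cext l (p + q) = cext l p + cext l q.
Proof. by rewrite -{1}(cscale1 p) cext_linear mul1r. Qed.

Lemma cext_cfunctional : is_cfunctional (cext l).
Proof.
split; first exact: cext_linear.
by split=> p; apply: (@continuous_comp _ _ _ _ (l : B -> R^o)) (hl.2 _);
  [exact: cvg_fst | exact: cvg_snd].
Qed.

End RealFunctional.

Lemma pair_cscale_i x y : (x, y) = cscale 'i%C (y, 0) + (x, 0).
Proof.
rewrite /cscale /= scale0r scaler0 scale1r subr0.
by apply: injective_projections => /=; rewrite ?scaler0 ?add0r ?addr0.
Qed.

Lemma ccone_quadrant (S : set (B -> R)) (hS : forall l, S l -> is_rfunctional l)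
    p c : c != 0 ->
  (forall l, S l -> 0 <= complex.Re (c * cext l p) /\ 0 <= complex.Im (c * cext l p)) ->
  (exists2 l0, S l0 & cext l0 p != 0) -> ccone S p.
Proof.
move=> c0 hpos [l0 Sl0 hl0].
(* rcone excludes 0: if x or y below vanishes, c p is a multiple of (y, y) or (x, x). *)
have hp : p = cscale c^-1 (cscale c p) by rewrite cscaleM mulVf // cscale1.
have hcext l : S l -> cext l (cscale c p) = c * cext l p by move/hS/cextZ.
move: hp hcext; case: (cscale c p) => x y hp hcext.
have hx l : S l -> 0 <= l x by move=> Sl; have := (hpos l Sl).1; rewrite -hcext.
have hy l : S l -> 0 <= l y by move=> Sl; have := (hpos l Sl).2; rewrite -hcext.
have xy_neq0 : ~ (x = 0 /\ y = 0).
  move=> [x0 y0]; move: hl0; have := hcext l0 Sl0.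
  rewrite x0 y0 /cext /= (rfunctional0 (hS _ Sl0)).
  by move=> /esym /eqP; rewrite mulf_eq0 (negbTE c0) /= => /eqP ->; rewrite /cext /= eqxx.
have ci0 : c^-1 != 0 by rewrite invr_eq0.
have half_neq0 (t : R) : (c^-1 * ((1/2) +i* t)%C) != 0.
  by rewrite mulf_neq0 // eq_complex /= negb_and mulf_neq0 ?oner_eq0.
have [x0|x0] := eqVneq x 0.
  have y0 : y != 0 by apply/eqP => y0; exact: xy_neq0.
  exists (c^-1 * ((1/2) +i* (1/2))%C), y, y; do 3?split => //.
  by rewrite -cscaleM cscale_diag /= subrr scale0r -splitr scale1r hp x0.
have [y0|y0] := eqVneq y 0.
  exists (c^-1 * ((1/2) +i* (-(1/2)))%C), x, x; do 3?split => //.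
  by rewrite -cscaleM cscale_diag /= opprK -splitr scale1r addNr scale0r hp y0.
by exists c^-1, x, y.
Qed.

End Complexification.

Section ComplexModulus.
Variable R : realType.
Implicit Types (x y z : R[i]) (a b : R).

Lemma cmodE z : cmod z = Normc.normc z.
Proof. by case: z. Qed.

Lemma cmod_pair a b : cmod (a +i* b)%C = Num.sqrt (a ^+ 2 + b ^+ 2).
Proof. by []. Qed.

Lemma cmod_ge0 z : 0 <= cmod z.
Proof. exact: sqrtr_ge0. Qed.

Lemma cmodM x y : cmod (x * y) = cmod x * cmod y.
Proof. by rewrite !cmodE Normc.normcM. Qed.

Lemma cmodV z : cmod z^-1 = (cmod z)^-1.
Proof. by rewrite !cmodE Normc.normcV. Qed.

Lemma cmodN z : cmod (- z) = cmod z.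
Proof. by case: z => a b; rewrite /cmod /= !sqrrN. Qed.

Lemma cmodi : cmod ('i : R[i])%C = 1.
Proof. by rewrite cmod_pair expr0n /= expr1n add0r sqrtr1. Qed.

Lemma ler_cmodD x y : cmod (x + y) <= cmod x + cmod y.
Proof. by rewrite !cmodE; exact: (@le_normcD R x y). Qed.

Lemma cmod_gt0 z : z != 0 -> 0 < cmod z.
Proof.
move=> z0; rewrite lt_neqAle cmod_ge0 andbT eq_sym; apply/eqP.
by rewrite cmodE => /Normc.eq0_normc z0'; rewrite z0' eqxx in z0.
Qed.

Lemma lerNcmod_Re z : - cmod z <= complex.Re z.
Proof.
rewrite lerNl; apply: le_trans (ler_norm _) _; rewrite normrN.
case: z => a b; rewrite /cmod /= -sqrtr_sqr ler_sqrt ?addr_ge0 ?sqr_ge0 //.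
by rewrite lerDl sqr_ge0.
Qed.

Lemma lerNcmod_Im z : - cmod z <= complex.Im z.
Proof.
rewrite lerNl; apply: le_trans (ler_norm _) _; rewrite normrN.
case: z => a b; rewrite /cmod /= -sqrtr_sqr ler_sqrt ?addr_ge0 ?sqr_ge0 //.
by rewrite lerDr sqr_ge0.
Qed.

Lemma ReD x y : complex.Re (x + y) = complex.Re x + complex.Re y.
Proof. by case: x; case: y. Qed.

Lemma ImD x y : complex.Im (x + y) = complex.Im x + complex.Im y.
Proof. by case: x; case: y. Qed.

Lemma cmod_approx_pair (A B : R[i]) a b eps :
  cmod (A - (a%:C)%C) <= eps * a -> cmod (B - (b%:C)%C) <= eps * b ->
  cmod ('i%C * B + A - (a +i* b)%C) <= eps * (a + b).
Proof.
move=> hA hB.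
have -> : 'i%C * B + A - (a +i* b)%C = (A - (a%:C)%C) + 'i%C * (B - (b%:C)%C).
  by apply/eqP; rewrite eq_complex; case: A {hA} => ? ?; case: B {hB} => ? ? /=;
    apply/andP; split; apply/eqP; ring.
rewrite [X in _ <= X]mulrDr; apply: le_trans (ler_cmodD _ _) _; apply: lerD => //.
by rewrite cmodM cmodi mul1r.
Qed.

End ComplexModulus.

Section Rotation.
Variable R : realType.
Local Notation s2 := (Num.sqrt (2 : R)).

Lemma sqr_sqrt2 : s2 ^+ 2 = 2.
Proof. by rewrite sqr_sqrtr // ler0n. Qed.

Lemma sqrt2_gt1 : 1 < s2.
Proof. rewrite -{1}sqrtr1 ltr_sqrt //; lra. Qed.

(* Rotates the sector {a + i b : 0 <= a, s a <= b <= s K a} into the first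
   quadrant. *)
Definition zeta (s K : R) : R[i] :=
  let n1 := Num.sqrt (1 + s ^+ 2) in let n2 := Num.sqrt (1 + s ^+ 2 * K ^+ 2) in
  let c := s * (n2 + n1 * K) in
  (((n1 + n2) + c) +i* ((n1 + n2) - c))%C.

Section ZetaBounds.
Variables (s K : R).
Local Notation n1 := (Num.sqrt (1 + s ^+ 2)).
Local Notation n2 := (Num.sqrt (1 + s ^+ 2 * K ^+ 2)).
Local Notation c := (s * (n2 + n1 * K)).

Let n1_ge0 : 0 <= n1. Proof. exact: sqrtr_ge0. Qed.
Let n2_ge0 : 0 <= n2. Proof. exact: sqrtr_ge0. Qed.
Let n1_sqr : n1 ^+ 2 = 1 + s ^+ 2.
Proof. by rewrite sqr_sqrtr // addr_ge0 // sqr_ge0. Qed.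
Let n2_sqr : n2 ^+ 2 = 1 + s ^+ 2 * K ^+ 2.
Proof. by rewrite sqr_sqrtr // addr_ge0 // mulr_ge0 // sqr_ge0. Qed.

(* Turns both square roots into variables, so that rewriting with their squares
   cannot reach inside the radicands. *)
Local Ltac abstract_sqrts :=
  have := n1_sqr; have := n2_sqr; have := n1_ge0; have := n2_ge0;
  move: (Num.sqrt (1 + s ^+ 2)) (Num.sqrt (1 + s ^+ 2 * K ^+ 2))
    => q1 q2 q20 q10 hq2 hq1.

Let sqr_le (x y : R) : 0 <= x -> 0 <= y -> x ^+ 2 <= y ^+ 2 -> x <= y.
Proof. by move=> x0 y0; rewrite ler_pXn2r // nnegrE. Qed.

Lemma one_add_sK_le : 0 < s -> 1 <= K -> 1 + s * K <= s2 * n2.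
Proof.
move=> s_gt0 K_ge1; abstract_sqrts.
apply: sqr_le; [by rewrite addr_ge0 // mulr_ge0 //; lra | by rewrite mulr_ge0 // sqrtr_ge0 |].
rewrite exprMn sqr_sqrt2 hq2.
have : 0 <= (1 - s * K) ^+ 2 by exact: sqr_ge0.
nra.
Qed.

(* Re and Im of zeta (1 + i t) are affine in t: their values at the ends of
   [s, s K] (only at t = s for Im, which increases). *)
Lemma zeta_vertex_bounds : 0 < s -> 1 <= K ->
  [/\ n1 * (1 + s ^+ 2 * K) <= (n1 + n2) + c - ((n1 + n2) - c) * s,
      n1 * (1 + s ^+ 2 * K) <= (n1 + n2) + c - ((n1 + n2) - c) * (s * K) &
      n1 * (1 + s ^+ 2 * K) <= ((n1 + n2) + c) * s + ((n1 + n2) - c)].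
Proof.
move=> s_gt0 K_ge1; abstract_sqrts.
have n1_ge1 : 1 <= q1 by apply: sqr_le => //; rewrite hq1 expr1n lerDl sqr_ge0.
have sK_le_n2 : s * K <= q2.
  by apply: sqr_le => //; [nra | rewrite hq2 exprMn lerDr ler01].
have n1_le_n2 : q1 <= q2.
  apply: sqr_le => //; rewrite hq1 hq2 lerD2l.
  by rewrite -{1}(mulr1 (s ^+ 2)) ler_wpM2l ?sqr_ge0 // exprn_ege1.
have sK_le_n1n2 : s * K <= q1 * q2 by nra.
split.
- have -> : q1 + q2 + s * (q2 + q1 * K) - (q1 + q2 - s * (q2 + q1 * K)) * s =
      q1 * (1 + s ^+ 2 * K) + (q2 * (1 + s ^+ 2) + q1 * s * (K - 1)) by ring.
  rewrite lerDl; apply: addr_ge0; apply: mulr_ge0 => //;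
    [by rewrite addr_ge0 ?sqr_ge0 | by rewrite mulr_ge0 // ltW | by rewrite subr_ge0].
- have -> : q1 + q2 + s * (q2 + q1 * K) - (q1 + q2 - s * (q2 + q1 * K)) * (s * K) =
      q2 * (q1 * q2 + 1 + s ^+ 2 * K - s * (K - 1))
      + q1 * (1 + s ^+ 2 * K ^+ 2 - q2 ^+ 2) by ring.
  rewrite hq2 subrr mulr0 addr0.
  have : q2 * (1 + s ^+ 2 * K) <= q2 * (q1 * q2 + 1 + s ^+ 2 * K - s * (K - 1)) by nra.
  by apply: le_trans; nra.
- have -> : (q1 + q2 + s * (q2 + q1 * K)) * s + (q1 + q2 - s * (q2 + q1 * K)) =
      q1 * (q1 * q2 + 1 + s ^+ 2 * K - s * (K - 1))
      + q2 * (1 + s ^+ 2 - q1 ^+ 2) by ring.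
  by rewrite hq1 subrr mulr0 addr0; nra.
Qed.

Lemma zeta_quadrant (a b : R) : 0 < s -> 1 <= K ->
    0 <= a -> s * a <= b -> b <= s * K * a ->
  a * n1 * (1 + s ^+ 2 * K) <= complex.Re (zeta s K * (a +i* b)%C) /\
  a * n1 * (1 + s ^+ 2 * K) <= complex.Im (zeta s K * (a +i* b)%C).
Proof.
move=> s_gt0 K_ge1 a0 hb1 hb2; rewrite /zeta /=.
have [E1 E2 E3] := zeta_vertex_bounds s_gt0 K_ge1.
move: E1 E2 E3; abstract_sqrts => E1 E2 E3.
have K_ge0 : 0 <= K by lra.
have A_ge0 : 0 <= (q1 + q2) + s * (q2 + q1 * K) by rewrite !(addr_ge0, mulr_ge0) // ltW.
split.
  have [D_ge0|D_lt0] := lerP 0 ((q1 + q2) - s * (q2 + q1 * K)).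
    have : ((q1 + q2) - s * (q2 + q1 * K)) * b <= ((q1 + q2) - s * (q2 + q1 * K)) * (s * K * a) by nra.
    nra.
  have : ((q1 + q2) - s * (q2 + q1 * K)) * b <= ((q1 + q2) - s * (q2 + q1 * K)) * (s * a) by nra.
  nra.
have : ((q1 + q2) + s * (q2 + q1 * K)) * (s * a) <= ((q1 + q2) + s * (q2 + q1 * K)) * b by nra.
nra.
Qed.

Lemma zeta_norm : 0 < s -> 1 <= K -> cmod (zeta s K) <= 2 * s2 * n1 * n2.
Proof.
move=> s_gt0 K_ge1.
rewrite /zeta cmod_pair -[X in _ <= X]ger0_norm ?mulr_ge0 ?sqrtr_ge0 //.
abstract_sqrts.
rewrite -sqrtr_sqr ler_sqrt ?sqr_ge0 //.
have al : 1 + s ^+ 2 * K <= q1 * q2.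
  apply: sqr_le; [by rewrite addr_ge0 // mulr_ge0 ?sqr_ge0 //; lra | nra |].
  rewrite exprMn hq1 hq2.
  have : 2 * K <= 1 + K ^+ 2 by nra.
  have : 0 <= s ^+ 2 by exact: sqr_ge0.
  nra.
have -> : (q1 + q2 + s * (q2 + q1 * K)) ^+ 2 + (q1 + q2 - s * (q2 + q1 * K)) ^+ 2 =
   2 * (q1 ^+ 2 * (1 + s ^+ 2 * K ^+ 2) + q2 ^+ 2 * (1 + s ^+ 2)
        + 2 * q1 * q2 * (1 + s ^+ 2 * K)) by ring.
rewrite -hq1 -hq2 !exprMn sqr_sqrt2.
have : 0 <= q1 * q2 by exact: mulr_ge0.
nra.
Qed.

Lemma zeta_neq0 : 0 < s -> 1 <= K -> zeta s K != 0.
Proof.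
move=> s_gt0 K_ge1; have n20 := n2_ge0.
rewrite /zeta eq_complex /= negb_and; apply/orP; left.
have n1_gt0 : 0 < n1 by rewrite sqrtr_gt0; have := sqr_ge0 s; lra.
have c_ge0 : 0 <= c by rewrite mulr_ge0 ?addr_ge0 ?mulr_ge0 //; lra.
rewrite gt_eqF //; lra.
Qed.

Lemma sector_sum_le a b : 0 < s -> 1 <= K -> 0 <= a -> b <= s * K * a ->
  a + b <= a * (s2 * n2).
Proof.
move=> s_gt0 K_ge1 a0 hb.
have : a * (1 + s * K) <= a * (s2 * n2) by rewrite ler_wpM2l // one_add_sK_le.
lra.
Qed.

Lemma cmod_sector_le a b : 0 < s -> 1 <= K -> 0 <= a -> s * a <= b -> b <= s * K * a ->
  cmod (a +i* b)%C <= a * n2.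
Proof.
move=> s_gt0 K_ge1 a0 hb1 hb2; have hn2 := n2_sqr; have n20 := n2_ge0.
rewrite cmod_pair -[X in _ <= X]ger0_norm ?mulr_ge0 // -sqrtr_sqr.
rewrite ler_sqrt ?sqr_ge0 // exprMn hn2 mulrDr mulr1.
have : b ^+ 2 <= (s * K * a) ^+ 2 by rewrite ler_pXn2r ?nnegrE //; nra.
rewrite !exprMn; lra.
Qed.

Lemma cmod_sector_perturbed a b eps (E : R[i]) : 0 < s -> 1 <= K -> 0 <= eps ->
  0 <= a -> s * a <= b -> b <= s * K * a -> cmod E <= eps * (a + b) ->
  cmod ((a +i* b)%C + E) <= a * n2 * (1 + s2 * eps).
Proof.
move=> s_gt0 K_ge1 eps0 a0 hb1 hb2 hE.
apply: le_trans (ler_cmodD _ _) _; rewrite mulrDr mulr1.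
apply: lerD; first exact: cmod_sector_le.
apply: le_trans hE _; rewrite [X in _ <= X](_ : _ = eps * (a * (s2 * n2))); last by ring.
by rewrite ler_wpM2l ?sector_sum_le.
Qed.

Lemma zeta_perturbed_quadrant a b eps (E : R[i]) : 0 < s -> 1 <= K -> 0 <= eps ->
  0 <= a -> s * a <= b -> b <= s * K * a -> cmod E <= eps * (a + b) ->
  let mu := a * n1 * n2 ^+ 2 * (K^-1 - 4 * eps) in
  mu <= complex.Re (zeta s K * ((a +i* b)%C + E)) /\
  mu <= complex.Im (zeta s K * ((a +i* b)%C + E)).
Proof.
move=> s_gt0 K_ge1 eps0 a0 hb1 hb2 hE mu.
have n10 := n1_ge0; have n20 := n2_ge0; have hn2 := n2_sqr.
have K_gt0 : 0 < K by lra.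
have err : cmod (zeta s K * E) <= 4 * n1 * n2 ^+ 2 * eps * a.
  rewrite cmodM.
  apply: le_trans (ler_pM (cmod_ge0 _) (cmod_ge0 _) (zeta_norm s_gt0 K_ge1) hE) _.
  have -> : 4 * n1 * n2 ^+ 2 * eps * a = 2 * s2 * n1 * n2 * eps * (a * (s2 * n2)).
    rewrite [RHS](_ : _ = 2 * s2 ^+ 2 * n1 * n2 ^+ 2 * eps * a); last by ring.
    by rewrite sqr_sqrt2; ring.
  rewrite -[X in _ <= X]mulrA; apply: ler_wpM2l.
    by rewrite !mulr_ge0 ?sqrtr_ge0 ?ler0n.
  exact: ler_wpM2l (sector_sum_le s_gt0 K_ge1 a0 hb2).
have mu_le : mu <= a * n1 * (1 + s ^+ 2 * K) - 4 * n1 * n2 ^+ 2 * eps * a.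
  have n2_le : n2 ^+ 2 / K <= 1 + s ^+ 2 * K.
    by rewrite ler_pdivrMr // hn2; nra.
  have -> : a * n1 * (1 + s ^+ 2 * K) - 4 * n1 * n2 ^+ 2 * eps * a =
      (a * n1) * ((1 + s ^+ 2 * K) - 4 * n2 ^+ 2 * eps) by ring.
  have -> : mu = (a * n1) * (n2 ^+ 2 / K - 4 * n2 ^+ 2 * eps) by rewrite /mu; ring.
  by rewrite ler_wpM2l ?mulr_ge0 // lerD2r.
have [qRe qIm] := zeta_quadrant s_gt0 K_ge1 a0 hb1 hb2.
rewrite mulrDr ReD ImD; split; apply: le_trans mu_le _; apply: lerD => //.
  by apply: le_trans (lerNcmod_Re _); rewrite lerN2.
by apply: le_trans (lerNcmod_Im _); rewrite lerN2.
Qed.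

End ZetaBounds.
End Rotation.

Section SupInfBounds.
Variable R : realType.
Implicit Types u v t : R.

Lemma mul_le_of_lt_all u v al : 0 <= u -> 0 <= v ->
  (forall t, t < al -> t * u <= v) -> al * u <= v.
Proof.
move=> u0 v0 hlt; have [->|u_neq0] := eqVneq u 0; first by rewrite mulr0.
have u_gt0 : 0 < u by rewrite lt_neqAle eq_sym u_neq0.
rewrite -ler_pdivlMr // leNgt; apply/negP => lt; have [m1 m2] := midf_lt lt.
by have := hlt _ m2; rewrite -ler_pdivlMr // => /(lt_le_trans m1); rewrite ltxx.
Qed.

Lemma mul_ge_of_gt_all u v be : 0 <= u ->
  (forall t, be < t -> v <= t * u) -> v <= be * u.
Proof.
move=> u0 hgt; have [u_eq0|u_neq0] := eqVneq u 0.
  by rewrite u_eq0 mulr0; have := hgt (be + 1); rewrite u_eq0 mulr0 ltrDl ltr01; apply.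
have u_gt0 : 0 < u by rewrite lt_neqAle eq_sym u_neq0.
rewrite -ler_pdivrMr // leNgt; apply/negP => lt; have [m1 m2] := midf_lt lt.
by have := hgt _ m1; rewrite -ler_pdivrMr // => /le_lt_trans/(_ m2); rewrite ltxx.
Qed.

End SupInfBounds.

Section ConeGeometry.
Variables (R : realType) (B : completeNormedModType R) (S : set (B -> R)).
Hypothesis hS : forall l, S l -> is_rfunctional l.

Lemma rcone_exists_pos (hsep : forall x, (forall l, S l -> l x = 0) -> x = 0) h :
  rcone S h -> exists2 l, S l & 0 < l h.
Proof.
move=> [h0 hpos]; apply: contrapT => hn; move/eqP: h0; apply; apply: hsep => l Sl.
apply/eqP; rewrite eq_le hpos // andbT leNgt; apply/negP => lt.
by apply: hn; exists l.
Qed.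

Lemma dH_neqNy g g' : dH S g g' != -oo%E.
Proof. by rewrite /dH; case: ifP. Qed.

Lemma hilbert_sandwich g g' (d : R) : rcone S g -> rcone S g' -> (dH S g g' <= d%:E)%E ->
  exists al be : R, [/\ 0 < al, be <= expR d * al &
     forall l, S l -> al * l g <= l g' /\ l g' <= be * l g].
Proof.
move=> [_ hg] [_ hg'] hd.
have below_alpha (t : R) : (t%:E < hilbert_alpha S g g')%E -> forall l, S l -> t * l g <= l g'.
  move=> /ereal_sup_gt [y [lam [lam0 [_ hc]] <-]]; rewrite lte_fin => lt l Sl.
  have := hc l Sl; rewrite (rfunctionalB (hS Sl)) (rfunctionalZ (hS Sl)).
  have := hg l Sl; nra.
have above_beta (t : R) : (hilbert_beta S g g' < t%:E)%E -> forall l, S l -> l g' <= t * l g.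
  move=> /ereal_inf_lt [y [lam [lam0 [_ hc]] <-]]; rewrite lte_fin => lt l Sl.
  have := hc l Sl; rewrite (rfunctionalB (hS Sl)) (rfunctionalZ (hS Sl)).
  have := hg l Sl; nra.
move: hd below_alpha above_beta; rewrite /dH /=.
case: ifP => [/andP[/andP[/andP[a0 aoo] b0] boo] | _]; last by rewrite leye_eq.
have af : hilbert_alpha S g g' \is a fin_num by rewrite fin_numElt aoo (lt_trans _ a0) ?ltNy0.
have bf : hilbert_beta S g g' \is a fin_num by rewrite fin_numElt boo (lt_trans _ b0) ?ltNy0.
rewrite -(fineK af) -(fineK bf) in a0 b0 *.
move: (fine (hilbert_alpha S g g')) (fine (hilbert_beta S g g')) a0 b0 => al be.
rewrite !lte_fin => al0 be0 /=; rewrite lee_fin => hd below_alpha above_beta.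
exists al, be; split => //.
  have hpos : 0 < be / al by rewrite divr_gt0.
  rewrite -ler_pdivrMr // mulrC [_^-1 * _]mulrC.
  by rewrite -[X in X <= _](@lnK _ (be / al)) ?posrE // ler_expR.
move=> l Sl; split.
  apply: mul_le_of_lt_all (hg l Sl) (hg' l Sl) _ => t t_lt.
  by apply: below_alpha => //; rewrite lte_fin.
apply: mul_ge_of_gt_all (hg l Sl) _ => t t_gt.
by apply: above_beta => //; rewrite lte_fin.
Qed.

Lemma cext_ccone_dual e m (kappa : R) : 0 < kappa ->
  cone_setting S e m kappa -> ccone_dual S (cext m).
Proof.
move=> k0 [_ [_ [_ [_ [_ [[hm _] [_ hmk]]]]]]].
split; first exact: cext_cfunctional.
move=> _ [z [x [y [z0 [[x0 hx] [[y0 hy] ->]]]]]].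
rewrite (cextZ hm) mulf_neq0 // eq_complex /= negb_and; apply/orP; left.
have kx_gt0 : 0 < kappa * `|x| by rewrite mulr_gt0 // normr_gt0.
by rewrite gt_eqF // (lt_le_trans kx_gt0) // hmk.
Qed.

Lemma cmod_dual_ratio_bounds p q (r1 r2 : R) l : 0 < r2 ->
  ccone S p -> ccone S q -> ccone_dual S l ->
  (forall w, cmod w < r1 -> ccone S (cscale (- w) q + p)) ->
  (forall w, cmod w < r2 -> ccone S (cscale (- w) p + q)) ->
  r1 <= cmod (l p / l q) <= r2^-1.
Proof.
move=> r2_gt0 Cp Cq [[hl _] hnz] H1 H2.
have lp0 := hnz p Cp; have lq0 := hnz q Cq.
apply/andP; split.
  by rewrite leNgt; apply/negP => /H1 /hnz; rewrite hl mulNr divfK // addNr eqxx.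
have : r2 <= cmod (l q / l p).
  by rewrite leNgt; apply/negP => /H2 /hnz; rewrite hl mulNr divfK // addNr eqxx.
rewrite -invf_div cmodV => r2_le.
have pq_gt0 : 0 < cmod (l p / l q) by apply: cmod_gt0; rewrite mulf_neq0 // invr_eq0.
by rewrite -[cmod _]invrK lef_pV2 ?posrE ?invr_gt0.
Qed.

Lemma deltaC_le_ln p q (r1 r2 : R) :
  0 < r1 -> 0 < r2 -> ccone S p -> ccone S q -> (exists l0, ccone_dual S l0) ->
  (forall w, cmod w < r1 -> ccone S (cscale (- w) q + p)) ->
  (forall w, cmod w < r2 -> ccone S (cscale (- w) p + q)) ->
  (deltaC S p q <= (ln ((r1 * r2)^-1))%:E)%E.
Proof.
move=> r10 r20 Cp Cq [l0 D0] H1 H2.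
set E := [set (cmod z)%:E | z in Eset S p q].
have hE x : E x -> exists2 t : R, x = t%:E & r1 <= t <= r2^-1.
  move=> [z [l Dl <-] <-]; exists (cmod (l p / l q)) => //.
  exact: cmod_dual_ratio_bounds.
have E0 : E (cmod (l0 p / l0 q))%:E by exists (l0 p / l0 q) => //; exists l0.
have /andP[r1_le le_r2] := cmod_dual_ratio_bounds r20 Cp Cq D0 H1 H2.
have inf_le : (ereal_inf E <= (cmod (l0 p / l0 q))%:E)%E by exact: ereal_inf_lbound.
have inf_ge : (r1%:E <= ereal_inf E)%E.
  by apply: le_ereal_inf_tmp => x /hE [t -> /andP[+ _]]; rewrite lee_fin.
have sup_le : (ereal_sup E <= (r2^-1)%:E)%E.
  by apply: ge_ereal_sup => x /hE [t -> /andP[_ +]]; rewrite lee_fin.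
have sup_ge : ((cmod (l0 p / l0 q))%:E <= ereal_sup E)%E by exact: ereal_sup_ubound.
have inf_fin : ereal_inf E \is a fin_num.
  by rewrite fin_numElt (lt_le_trans _ inf_ge) ?ltNyr // (le_lt_trans inf_le) ?ltry.
have sup_fin : ereal_sup E \is a fin_num.
  by rewrite fin_numElt (lt_le_trans _ sup_ge) ?ltNyr // (le_lt_trans sup_le) ?ltry.
rewrite /deltaC /= -/E.
move: inf_ge inf_le sup_le sup_ge.
rewrite -(fineK inf_fin) -(fineK sup_fin) !lee_fin => inf_ge inf_le sup_le sup_ge.
have inf_gt0 : 0 < fine (ereal_inf E) by exact: (lt_le_trans r10 inf_ge).
rewrite !lte_fin ltry inf_gt0 /= ltry lee_fin.
rewrite ler_ln ?posrE ?divr_gt0 ?invr_gt0 ?mulr_gt0 //; last first.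
  by apply: (lt_le_trans inf_gt0); apply: (le_trans inf_le).
have -> : (r1 * r2)^-1 = r2^-1 * r1^-1 by rewrite invfM mulrC.
apply: ler_pM => //.
- by apply: (le_trans _ sup_ge); apply: (le_trans (ltW r10)).
- by rewrite invr_ge0 ltW.
- by rewrite lef_pV2 ?posrE.
Qed.

End ConeGeometry.

Section QuadrantFrame.
Variables (R : realType) (B : completeNormedModType R) (S : set (B -> R)) (h0 : B).
Hypothesis hS : forall l, S l -> is_rfunctional l.
Hypothesis h0_cone : rcone S h0.
Hypothesis h0_pos : exists2 l0, S l0 & 0 < l0 h0.

(* Quantitative membership in the complex cone, measured against h0:
   c l(p) lies in the first quadrant at depth mu l(h0) and |l(p)| <= M l(h0). *)
Definition in_quadrant (c : R[i]) (mu : R) (p : B * B) :=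
  forall l, S l -> mu * l h0 <= complex.Re (c * cext l p) /\
                   mu * l h0 <= complex.Im (c * cext l p).

Definition cext_dominated (M : R) (p : B * B) :=
  forall l, S l -> cmod (cext l p) <= M * l h0.

Definition ccone_deep (rho : R) (p : B * B) :=
  exists c mu M, [/\ c != 0, 0 < M, rho * (cmod c * M) <= mu,
                     in_quadrant c mu p & cext_dominated M p].

Lemma in_quadrant_ccone c mu p : c != 0 -> 0 < mu -> in_quadrant c mu p -> ccone S p.
Proof.
move=> c0 mu0 hp; apply: (ccone_quadrant hS c0).
  move=> l Sl; have [hRe hIm] := hp l Sl.
  have mu_ge0 : 0 <= mu * l h0 by apply: mulr_ge0; [exact: ltW | exact: h0_cone.2].
  by split; [exact: le_trans hRe | exact: le_trans hIm].
have [l0 Sl0 l0_pos] := h0_pos; exists l0 => //; apply/eqP => hl0.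
have [+ _] := hp l0 Sl0; rewrite hl0 mulr0 /= leNgt => /negP; apply.
by rewrite mulr_gt0.
Qed.

Lemma in_quadrant_perturb c mu M p q w : in_quadrant c mu p -> cext_dominated M q ->
  in_quadrant c (mu - cmod c * cmod w * M) (cscale (- w) q + p).
Proof.
move=> hp hq l Sl; have hl := hS Sl; have [hRe hIm] := hp l Sl.
have err : cmod (c * (- w * cext l q)) <= cmod c * cmod w * M * l h0.
  rewrite !cmodM cmodN mulrA -[X in _ <= X]mulrA.
  by apply: ler_wpM2l; [rewrite mulr_ge0 ?cmod_ge0 | exact: hq].
rewrite (cext_linear hl) mulrDr ReD ImD mulrBl.
split; rewrite addrC; apply: lerD => //.
  by apply: le_trans (lerNcmod_Re _); rewrite lerN2.
by apply: le_trans (lerNcmod_Im _); rewrite lerN2.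
Qed.

Lemma ccone_perturb c mu M p q : c != 0 -> 0 < M ->
  in_quadrant c mu p -> cext_dominated M q ->
  forall w, cmod w < mu / (cmod c * M) -> ccone S (cscale (- w) q + p).
Proof.
move=> c0 M0 hp hq w hw; have c_gt0 := cmod_gt0 c0.
apply: (in_quadrant_ccone c0 _ (in_quadrant_perturb w hp hq)).
by rewrite subr_gt0 -mulrA mulrCA -ltr_pdivlMr ?mulr_gt0.
Qed.

Lemma ccone_deep_ccone rho p : 0 < rho -> ccone_deep rho p -> ccone S p.
Proof.
move=> rho0 [c [mu [M [c0 M0 hrho hp _]]]]; apply: (in_quadrant_ccone c0 _ hp).
by apply: lt_le_trans hrho; rewrite !mulr_gt0 ?cmod_gt0.
Qed.

Lemma deltaC_deep_le rho p q : 0 < rho -> (exists l, ccone_dual S l) ->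
  ccone_deep rho p -> ccone_deep rho q -> (deltaC S p q <= (ln (rho ^- 2))%:E)%E.
Proof.
move=> rho0 dual_ne Dp Dq.
have [c [mu [M [c0 M0 hrho hp hpM]]]] := Dp.
have [c' [mu' [M' [c0' M0' hrho' hq hqM]]]] := Dq.
have cc := cmod_gt0 c0; have cc' := cmod_gt0 c0'.
have mu0 : 0 < mu by apply: lt_le_trans hrho; rewrite !mulr_gt0.
have mu0' : 0 < mu' by apply: lt_le_trans hrho'; rewrite !mulr_gt0.
have r1_gt0 : 0 < mu / (cmod c * M') by rewrite divr_gt0 // mulr_gt0.
have r2_gt0 : 0 < mu' / (cmod c' * M) by rewrite divr_gt0 // mulr_gt0.
apply: le_trans (deltaC_le_ln r1_gt0 r2_gt0 (ccone_deep_ccone rho0 Dp) (ccone_deep_ccone rho0 Dq)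
  dual_ne (ccone_perturb c0 M0' hp hqM) (ccone_perturb c0' M0 hq hpM)) _.
rewrite lee_fin ler_ln ?posrE ?invr_gt0 ?exprn_gt0 ?mulr_gt0 ?invr_gt0 ?mulr_gt0 //.
rewrite lef_pV2 ?posrE ?exprn_gt0 ?mulr_gt0 ?invr_gt0 ?mulr_gt0 //.
have -> : mu / (cmod c * M') * (mu' / (cmod c' * M)) =
    (mu / (cmod c * M)) * (mu' / (cmod c' * M')).
  by field; rewrite !gt_eqF.
rewrite expr2; apply: ler_pM; [exact: ltW | exact: ltW | |].
  by rewrite ler_pdivlMr ?mulr_gt0.
by rewrite ler_pdivlMr ?mulr_gt0.
Qed.

End QuadrantFrame.

Section OperatorFacts.
Variables (R : realType) (B1 B2 : completeNormedModType R).
Variable LC : B1 * B1 -> B2 * B2.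
Hypothesis hLC : is_cop LC.

Lemma copD p q : LC (p + q) = LC p + LC q.
Proof. by rewrite -{1}(cscale1 p) hLC.1 cscale1. Qed.

Lemma cop0 : LC 0 = 0.
Proof. by apply: (addrI (LC 0)); rewrite -copD !addr0. Qed.

Lemma copZ z p : LC (cscale z p) = cscale z (LC p).
Proof. by rewrite -[cscale z p]addr0 hLC.1 cop0 addr0. Qed.

Lemma cext_cop_ccone_generator l (z : R[i]) (x y : B1) : is_rfunctional l ->
  cext l (LC (cscale z (x, y))) = z * ('i%C * cext l (LC (y, 0)) + cext l (LC (x, 0))).
Proof.
move=> hl.
by rewrite copZ (cextZ hl) pair_cscale_i copD copZ (cextD hl) (cextZ hl).
Qed.

End OperatorFacts.

Section ApertureNumerics.
Variable R : realType.
Local Notation s2 := (Num.sqrt (2 : R)).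

(* The ratio mu / (|c| M) of ccone_deep that the rotation zeta achieves on the
   whole image cone when the Hilbert diameter is ln K and LC is eps-close to L. *)
Definition aperture (K eps : R) := (K^-1 - 4 * eps) / (2 * s2 * K * (1 + s2 * eps)).

Variables (K eps : R).
Hypotheses (K_ge1 : 1 <= K) (eps_gt0 : 0 < eps) (eps_small : eps * (12 * s2 * K ^+ 2) < 1).

Lemma four_eps_K_lt1 : 4 * eps * K < 1.
Proof.
have s2_gt1 := sqrt2_gt1 R; have K1 := K_ge1; have e0 := eps_gt0.
have : 4 * eps * K <= eps * (12 * s2 * K ^+ 2).
  have sK : 1 <= s2 * K by rewrite mulr_ege1 // ltW.
  have h4 : 4 * K <= 12 * s2 * K ^+ 2.
    by have := ler_wpM2r (le_trans ler01 K1) sK; rewrite expr2 mul1r; lra.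
  by rewrite -mulrA mulrCA ler_wpM2l // ltW.
have := eps_small; lra.
Qed.

Lemma aperture_gt0 : 0 < aperture K eps.
Proof.
have s2_gt0 : 0 < s2 by rewrite sqrtr_gt0 ltr0n.
have K_gt0 : 0 < K by apply: lt_le_trans K_ge1.
rewrite divr_gt0 //; first by rewrite subr_gt0 -div1r ltr_pdivlMr // four_eps_K_lt1.
by rewrite !mulr_gt0 ?ltr0n // addr_gt0 // mulr_gt0.
Qed.

(* eps_small gives 12 eps K <= 5/6 (as sqrt 2 >= 6/5) and 2 sqrt 2 eps <= 1/6,
   whence 2 (1 + sqrt 2 eps) <= 3 - 12 eps K. *)
Lemma aperture_inv_le : (aperture K eps)^-1 <= 3 * s2 * K ^+ 2.
Proof.
have q1 := sqrt2_gt1 R; have q2 := sqr_sqrt2 R; have k1 := K_ge1.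
have e0 := eps_gt0; have h := eps_small.
have s2_gt0 : 0 < s2 by lra.
have K_gt0 : 0 < K by lra.
rewrite -(ler_pM2r aperture_gt0) mulVf ?gt_eqF ?aperture_gt0 // /aperture.
have d0 : 0 < 2 * s2 * K * (1 + s2 * eps).
  by rewrite !mulr_gt0 ?ltr0n // addr_gt0 // mulr_gt0.
rewrite mulrA ler_pdivlMr // mul1r.
have -> : 3 * s2 * K ^+ 2 * (K^-1 - 4 * eps) = s2 * K * (3 - 12 * eps * K).
  by rewrite expr2; field; rewrite gt_eqF.
have s2_ge65 : 6 / 5 <= s2.
  rewrite leNgt; apply/negP => hl.
  have : s2 * s2 < 6 / 5 * (6 / 5) by apply: ltr_pM => //; apply: ltW; lra.
  rewrite -expr2 q2; lra.
have hA : 12 * eps * K * (6 / 5) <= 1.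
  have : 12 * eps * K * (6 / 5) <= eps * (12 * s2 * K ^+ 2).
    have h65 : 6 / 5 <= s2 * K by nra.
    have -> : eps * (12 * s2 * K ^+ 2) = (12 * eps * K) * (s2 * K) by ring.
    by apply: ler_wpM2l => //; rewrite !mulr_ge0 //; lra.
  lra.
have hB : 2 * s2 * eps <= 1 / 6.
  have : 2 * s2 * eps * 6 <= eps * (12 * s2 * K ^+ 2).
    have hk : 1 <= K ^+ 2 by rewrite expr_ge1 //; lra.
    have -> : eps * (12 * s2 * K ^+ 2) = (2 * s2 * eps * 6) * K ^+ 2 by ring.
    rewrite -{1}(mulr1 (2 * s2 * eps * 6)); apply: ler_wpM2l => //.
    by rewrite !mulr_ge0 //; lra.
  lra.
have -> : 2 * s2 * K * (1 + s2 * eps) = s2 * K * (2 * (1 + s2 * eps)) by ring.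
by apply: ler_wpM2l; [rewrite mulr_ge0 //; lra | lra].
Qed.

End ApertureNumerics.

Lemma ln_aperture_weaken (R : realType) (D kappa r : R) : 0 <= D -> 0 < kappa < 1 -> 0 < r ->
  r^-1 <= 3 * Num.sqrt 2 * expR D ^+ 2 ->
  ln (r ^- 2) <= 8 * D + 2 * ln (3 * Num.sqrt 2 * kappa ^- 2).
Proof.
move=> D0 /andP[k0 k1] r0 hr.
have kappa_gt0 : 0 < kappa ^- 2 by rewrite invr_gt0 exprn_gt0.
set a := 3 * Num.sqrt 2 * kappa ^- 2.
have a_gt0 : 0 < a by rewrite !mulr_gt0 ?ltr0n ?sqrtr_gt0 ?ltr0n.
have -> : 8 * D + 2 * ln a = ln ((a * expR D ^+ 4) ^+ 2).
  rewrite -[LHS]expRK; congr ln.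
  by rewrite expRD !expRM_natl lnK ?posrE // [RHS]exprMn -exprM mulrC.
rewrite ler_ln ?posrE ?exprn_gt0 ?invr_gt0 ?mulr_gt0 ?expR_gt0 //.
have K_gt0 := expR_gt0 D.
rewrite -exprVn ler_pXn2r ?nnegrE ?invr_ge0 ?(ltW r0) //; last first.
  by rewrite mulr_ge0 ?exprn_ge0 // ltW.
apply: le_trans hr _.
have -> : a * expR D ^+ 4 = (3 * Num.sqrt 2 * expR D ^+ 2) * (kappa ^- 2 * expR D ^+ 2).
  by rewrite /a; ring.
rewrite -[X in X <= _]mulr1 ler_wpM2l ?mulr_ge0 ?sqrtr_ge0 ?sqr_ge0 ?ler0n //.
have K_ge1 : 1 <= expR D by rewrite -expR0 ler_expR.
rewrite mulr_ege1 ?exprn_ege1 //.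
by rewrite invf_ge1 ?exprn_gt0 // expr_le1 // ltW.
Qed.

Section ApertureZeta.
Variables (R : realType) (K eps s : R).
Local Notation n1 := (Num.sqrt (1 + s ^+ 2)).
Local Notation n2 := (Num.sqrt (1 + s ^+ 2 * K ^+ 2)).

Lemma aperture_zeta_le ax :
  0 < s -> 1 <= K -> 0 <= ax -> 0 < 1 + Num.sqrt 2 * eps -> 0 <= aperture K eps ->
  aperture K eps * (cmod (zeta s K) * (K * ax * n2 * (1 + Num.sqrt 2 * eps)))
    <= ax * n1 * n2 ^+ 2 * (K^-1 - 4 * eps).
Proof.
move=> s_gt0 K_ge1 ax0 e0 rho0.
have K_gt0 : 0 < K by apply: lt_le_trans K_ge1.
have s2_gt0 : 0 < Num.sqrt (2 : R) by rewrite sqrtr_gt0 ltr0n.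
apply: (le_trans
  (y := aperture K eps * (2 * Num.sqrt 2 * n1 * n2 * (K * ax * n2 * (1 + Num.sqrt 2 * eps))))).
  rewrite ler_wpM2l // ler_wpM2r ?zeta_norm //.
  by rewrite !mulr_ge0 ?sqrtr_ge0 // ?(ltW K_gt0) ?(ltW e0).
have n1_gt0 : 0 < n1 by rewrite sqrtr_gt0; have := sqr_ge0 s; lra.
have n2_gt0 : 0 < n2 by rewrite sqrtr_gt0 ltr_wpDr ?ltr01 // mulr_ge0 ?sqr_ge0.
by rewrite /aperture le_eqVlt; apply/orP; left; apply/eqP; field; rewrite !gt_eqF.
Qed.

End ApertureZeta.

Section ImageCone.
Variables (R : realType) (B1 B2 : completeNormedModType R).
Variables (S1 : set (B1 -> R)) (S2 : set (B2 -> R)) (e1 : B1) (e2 : B2)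
  (m1 : B1 -> R) (m2 : B2 -> R) (kappa : R).
Hypothesis hkappa : 0 < kappa < 1.
Hypotheses (hset1 : cone_setting S1 e1 m1 kappa) (hset2 : cone_setting S2 e2 m2 kappa).
Variables (L : B1 -> B2) (LC : B1 * B1 -> B2 * B2).
Hypothesis hLC : is_cop LC.
Hypothesis hLcone : forall h, rcone S1 h -> rcone S2 (L h).
Hypothesis hDelta : (diam (dH S2) (L @` rcone S1) < +oo)%E.
Variable eps : R.
Hypothesis heps0 : 0 < eps.
Hypothesis heps1 : eps < kappa ^+ 2 / (12 * Num.sqrt 2)
                 * expR (- 2 * fine (diam (dH S2) (L @` rcone S1))).
Hypothesis hclose : forall l h, S2 l -> rcone S1 h ->
     cmod (cext l (LC (h, 0)) - ((l (L h))%:C)%C) <= eps * l (L h).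

Local Notation s2 := (Num.sqrt (2 : R)).
Let hS2 : forall l, S2 l -> is_rfunctional l := hset2.1.
Let Img := L @` rcone S1.
Let h0 := L e1.
Let Img_h0 : Img h0. Proof. by exists e1 => //; exact: hset1.2.2.1. Qed.
Let h0_cone : rcone S2 h0 := hLcone hset1.2.2.1.
Let D := fine (diam (dH S2) Img).
Let K := expR D.

Lemma Img_rcone g : Img g -> rcone S2 g.
Proof. by case=> x hx <-; exact: hLcone. Qed.

Lemma h0_pos : exists2 l, S2 l & 0 < l h0.
Proof. exact: rcone_exists_pos hset2.2.1 _ h0_cone. Qed.

Lemma dH_le_diam g g' : Img g -> Img g' -> (dH S2 g g' <= D%:E)%E.
Proof.
move=> ig ig'.
have dH_le : (dH S2 g g' <= diam (dH S2) Img)%E by apply: ereal_sup_ubound; exists g, g'.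
rewrite /D fineK // fin_numElt hDelta andbT.
by apply: lt_le_trans dH_le; rewrite ltNye dH_neqNy.
Qed.

Lemma image_sandwich g g' : Img g -> Img g' -> exists2 al, 0 < al &
  forall l, S2 l -> al * l g <= l g' /\ l g' <= K * al * l g.
Proof.
move=> ig ig'.
have [al [be [al0 hbe hl]]] :=
  hilbert_sandwich hS2 (Img_rcone ig) (Img_rcone ig') (dH_le_diam ig ig').
exists al => // l Sl; have [h1 h2] := hl l Sl; split => //.
by apply: le_trans h2 _; rewrite ler_wpM2r // (Img_rcone ig).2.
Qed.

Lemma expR_diam_ge1 : 1 <= K.
Proof.
have [l0 Sl0 l0_pos] := h0_pos.
have [al [be [al0 hbe hl]]] := hilbert_sandwich hS2 h0_cone h0_cone (dH_le_diam Img_h0 Img_h0).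
have [h1 h2] := hl l0 Sl0.
have al1 : al <= 1 by rewrite -(ler_pM2r l0_pos) mul1r.
have be1 : 1 <= be by rewrite -(ler_pM2r l0_pos) mul1r.
have K_gt0 : 0 < K by exact: expR_gt0.
by rewrite /K; nra.
Qed.

Lemma eps_scaled_lt1 : eps * (12 * s2 * K ^+ 2) < 1.
Proof.
have c0 : 0 < 12 * s2 * K ^+ 2 by rewrite !mulr_gt0 ?sqrtr_gt0 ?ltr0n ?exprn_gt0 ?expR_gt0.
have := heps1; rewrite -(ltr_pM2r c0) => /lt_le_trans; apply.
have -> : kappa ^+ 2 / (12 * s2) * expR (- 2 * D) * (12 * s2 * K ^+ 2) =
    kappa ^+ 2 * (expR (- 2 * D) * K ^+ 2).
  by field; rewrite gt_eqF ?mulr_gt0 ?sqrtr_gt0 ?ltr0n.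
have -> : expR (- 2 * D) * K ^+ 2 = 1.
  by rewrite /K expr2 mulrA -!expRD (_ : - 2 * D + D + D = 0) ?expR0 //; ring.
by rewrite mulr1; case/andP: hkappa => k0 k1; rewrite expr_le1 // ltW.
Qed.

Local Notation n1 s := (Num.sqrt (1 + s ^+ 2)).
Local Notation n2 s := (Num.sqrt (1 + s ^+ 2 * K ^+ 2)).

Lemma generator_estimates x y l ax sg : rcone S1 x -> rcone S1 y -> S2 l -> 0 < sg ->
  ax * l h0 <= l (L x) -> l (L x) <= K * ax * l h0 ->
  sg * l (L x) <= l (L y) -> l (L y) <= K * sg * l (L x) ->
  let w := 'i%C * cext l (LC (y, 0)) + cext l (LC (x, 0)) in
  [/\ ax * n1 sg * n2 sg ^+ 2 * (K^-1 - 4 * eps) * l h0 <= complex.Re (zeta sg K * w),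
      ax * n1 sg * n2 sg ^+ 2 * (K^-1 - 4 * eps) * l h0 <= complex.Im (zeta sg K * w) &
      cmod w <= K * ax * n2 sg * (1 + s2 * eps) * l h0].
Proof.
move=> hx hy Sl sg0 ha1 ha2 hb1 hb2 w.
have K1 := expR_diam_ge1; have eps0 := ltW heps0.
have a0 : 0 <= l (L x) := (hLcone hx).2 l Sl.
have hb2' : l (L y) <= sg * K * l (L x) by rewrite (mulrC sg).
have hE := cmod_approx_pair (hclose Sl hx) (hclose Sl hy).
have w_split : (l (L x) +i* l (L y))%C + (w - (l (L x) +i* l (L y))%C) = w.
  by rewrite addrC subrK.
have [qRe qIm] := zeta_perturbed_quadrant sg0 K1 eps0 a0 hb1 hb2' hE.
have hw := cmod_sector_perturbed sg0 K1 eps0 a0 hb1 hb2' hE.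
rewrite w_split in qRe qIm hw.
have k_ge0 : 0 <= K^-1 - 4 * eps.
  by rewrite subr_ge0 -div1r ler_pdivlMr ?expR_gt0 // ltW // four_eps_K_lt1 // eps_scaled_lt1.
have mu_le : ax * n1 sg * n2 sg ^+ 2 * (K^-1 - 4 * eps) * l h0
    <= l (L x) * n1 sg * n2 sg ^+ 2 * (K^-1 - 4 * eps).
  rewrite (mulrAC _ _ (l h0)) 2!(mulrAC _ _ (l h0)) -!mulrA !(mulrA _ (l h0)).
  by rewrite ler_wpM2r // !mulr_ge0 ?sqrtr_ge0 ?exprn_ge0.
split; [exact: le_trans qRe | exact: le_trans qIm |].
apply: le_trans hw _; rewrite (mulrAC _ _ (l h0)) (mulrAC _ _ (l h0)).
by rewrite ler_wpM2r ?addr_ge0 ?mulr_ge0 ?sqrtr_ge0 // ler_wpM2r ?sqrtr_ge0.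
Qed.

Lemma image_ccone_deep u : ccone S1 u -> ccone_deep S2 h0 (aperture K eps) (LC u).
Proof.
case=> z [x [y [z0 [hx [hy ->]]]]].
have Ix : Img (L x) by exists x.
have [ax ax0 hax] := image_sandwich Img_h0 Ix.
have [sg sg0 hsg] := image_sandwich Ix (ex_intro2 _ _ y hy erefl).
have K1 := expR_diam_ge1; have cz0 := cmod_gt0 z0.
have se0 : 0 < 1 + s2 * eps by rewrite addr_gt0 // mulr_gt0 ?sqrtr_gt0 ?ltr0n.
have n2_gt0 : 0 < n2 sg by rewrite sqrtr_gt0 ltr_wpDr ?ltr01 // mulr_ge0 ?sqr_ge0.
exists (zeta sg K / z), (ax * n1 sg * n2 sg ^+ 2 * (K^-1 - 4 * eps)),
  (cmod z * (K * ax * n2 sg * (1 + s2 * eps))); split.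
- by rewrite mulf_neq0 ?invr_eq0 // zeta_neq0.
- by rewrite !mulr_gt0 ?expR_gt0.
- rewrite cmodM cmodV.
  have -> : cmod (zeta sg K) * (cmod z)^-1 * (cmod z * (K * ax * n2 sg * (1 + s2 * eps)))
      = cmod (zeta sg K) * (K * ax * n2 sg * (1 + s2 * eps)).
    by field; rewrite gt_eqF.
  exact: aperture_zeta_le (ltW ax0) se0 (ltW (aperture_gt0 K1 heps0 eps_scaled_lt1)).
- move=> l Sl; have [ha1 ha2] := hax l Sl; have [hb1 hb2] := hsg l Sl.
  have [hRe hIm _] := generator_estimates hx hy Sl sg0 ha1 ha2 hb1 hb2.
  by rewrite (cext_cop_ccone_generator hLC _ _ _ (hS2 Sl)) mulrA divfK.
- move=> l Sl; have [ha1 ha2] := hax l Sl; have [hb1 hb2] := hsg l Sl.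
  have [_ _ hw] := generator_estimates hx hy Sl sg0 ha1 ha2 hb1 hb2.
  rewrite (cext_cop_ccone_generator hLC _ _ _ (hS2 Sl)) cmodM -mulrA.
  by rewrite ler_wpM2l ?cmod_ge0.
Qed.

Lemma LC_ccone p : ccone S1 p -> ccone S2 (LC p).
Proof.
move=> Cp; have rho0 := aperture_gt0 expR_diam_ge1 heps0 eps_scaled_lt1.
exact: (ccone_deep_ccone hS2 h0_cone h0_pos rho0 (image_ccone_deep Cp)).
Qed.

Lemma deltaC_image_le p q : (LC @` ccone S1) p -> (LC @` ccone S1) q ->
  (deltaC S2 p q <= (8 * D + 2 * ln (3 * s2 * kappa ^- 2))%:E)%E.
Proof.
move=> [u Cu <-] [v Cv <-].
have rho0 := aperture_gt0 expR_diam_ge1 heps0 eps_scaled_lt1.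
have kappa0 : 0 < kappa by case/andP: hkappa.
have dual_ne : exists l, ccone_dual S2 l by exists (cext m2); exact: cext_ccone_dual hset2.
apply: le_trans (deltaC_deep_le hS2 h0_cone h0_pos rho0 dual_ne
  (image_ccone_deep Cu) (image_ccone_deep Cv)) _.
rewrite lee_fin ln_aperture_weaken // ?aperture_inv_le ?expR_diam_ge1 ?eps_scaled_lt1 //.
by rewrite -ler_expR expR0 expR_diam_ge1.
Qed.

End ImageCone.

Unset Implicit Arguments.

Theorem theorem5p17 (R : realType) (B1 B2 : completeNormedModType R)
  (S1 : set (B1 -> R)) (S2 : set (B2 -> R)) (e1 : B1) (e2 : B2)
  (m1 : B1 -> R) (m2 : B2 -> R) (kappa : R)
  (hkappa : 0 < kappa < 1)
  (hset1 : cone_setting S1 e1 m1 kappa) (hset2 : cone_setting S2 e2 m2 kappa)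
  (L : B1 -> B2) (LC : B1 * B1 -> B2 * B2)
  (hL : is_rop L) (hLC : is_cop LC)
  (hLcone : forall h, rcone S1 h -> rcone S2 (L h))
  (hDelta : (diam (dH S2) (L @` rcone S1) < +oo)%E)
  (eps : R) (heps0 : 0 < eps)
  (heps1 : eps < kappa ^+ 2 / (12 * Num.sqrt 2)
                 * expR (- 2 * fine (diam (dH S2) (L @` rcone S1))))
  (hclose : forall l h, S2 l -> rcone S1 h ->
     cmod (cext l (LC (h, 0)) - ((l (L h))%:C)%C) <= eps * l (L h)) :
  (forall p, ccone S1 p -> ccone S2 (LC p)) /\
  (diam (deltaC S2) (LC @` ccone S1) <=
     (8 * fine (diam (dH S2) (L @` rcone S1))
      + 2 * ln (3 * Num.sqrt 2 * kappa ^- 2)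
      + Num.sqrt 2 / 3 * kappa ^+ 2
          * expR (- 2 * fine (diam (dH S2) (L @` rcone S1))))%:E)%E.
Proof.
split; first exact: (LC_ccone hkappa hset1 hset2 hLC hLcone hDelta heps0 heps1 hclose).
apply: ge_ereal_sup => _ [p [q [Ip [Iq ->]]]].
apply: le_trans
  (deltaC_image_le hkappa hset1 hset2 hLC hLcone hDelta heps0 heps1 hclose Ip Iq) _.
have kappa_ge0 : 0 <= kappa by case/andP: hkappa => /ltW.
by rewrite lee_fin lerDl !mulr_ge0 ?expR_ge0 ?sqrtr_ge0.
Qed.
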